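(* Let $\mathcal A$ be a toric arrangement in $T$ equal to its saturation, let $\mathcal F$ be a smooth projective fan compatible with $\mathcal A$, let $\mathcal G$ be a smooth projective refinement of $\mathcal F$, and let $\psi^{\mathcal F}_{\mathcal G}:X_{\mathcal G}\to X_{\mathcal F}$ be the unique $T$-equivariant projective morphism of toric varieties extending the identity of $T$. Then for each layer $\mathcal K_{\Gamma,\phi}\in\mathcal A$, the preimage under $\psi^{\mathcal F}_{\mathcal G}$ of the closure of $\mathcal K_{\Gamma,\phi}$ in $X_{\mathcal F}$ equals the closure of $\mathcal K_{\Gamma,\phi}$ in $X_{\mathcal G}$. (In particular $\mathcal G$ is also compatible with $\mathcal A$.)
   Context: $T$ is a complex algebraic torus with character lattice $X^*(T)$, $V=X_*(T)\otimes\mathbb R$. A layer is $\mathcal K_{\Gamma,\phi}=\{t\in T:\chi(t)=\phi(\chi)\ \forall\chi\in\Gamma\}$, where $\Gamma$ is a split direct summand of $X^*(T)$ and $\phi:\Gamma\to\mathbb C^*$ a homomorphism. A toric arrangement is a finite set of layers; its saturation is the set of all connected components of intersections of its layers, and we assume $\mathcal A$ equals its saturation. For a toric variety, $X_{\mathcal F}$ denotes the smooth projective $T$-toric variety of the smooth projective fan $\mathcal F$. A finite set $\{\chi_1,\dots,\chi_s\}\subset X^*(T)$ has equal sign with respect to $\mathcal F$ if each function $\langle\chi_i,-\rangle$ is either $\ge0$ on $C$ or $\le 0$ on $C$ for every cone $C\in\mathcal F$. $\mathcal F$ is compatible with $\mathcal A$ if for every pair of layers $\mathcal K_{\Gamma,\phi}\subseteq\mathcal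 K_{\Gamma',\psi}$ in $\mathcal A$ there is an integral basis of $\Gamma$ having equal sign with respect to $\mathcal F$ whose intersection with $\Gamma'$ is a basis of $\Gamma'$ (having equal sign). A refinement $\mathcal G$ of $\mathcal F$ is a fan each of whose cones is contained in a cone of $\mathcal F$ and such that every cone of $\mathcal F$ is a union of cones of $\mathcal G$. *)

From mathcomp Require Import all_boot all_algebra.
From mathcomp Require Import reals.
From mathcomp.real_closed Require Import complex.
Set Implicit Arguments. Unset Strict Implicit. Unset Printing Implicit Defensive.
Import GRing.Theory Num.Theory.
Local Open Scope ring_scope.
Local Open Scope complex_scope.

Section Toric.
Variables (R : realType) (n : nat).

(* X^*(T) = Z^n (characters), V = X_*(T) (x) R = R^n, T = (C^* )^n *)
Definition lat := 'rV[int]_n.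
Definition pt := 'rV[R[i]]_n.

Definition pairing (m : lat) (v : 'rV[R]_n) : R := \sum_i (m 0 i)%:~R * v 0 i.
Definition dotR (u v : 'rV[R]_n) : R := \sum_i u 0 i * v 0 i.

Definition cone (g : seq lat) (v : 'rV[R]_n) : Prop :=
  exists a : seq R, size a = size g /\ (forall i, 0 <= a`_i) /\
    v = \sum_(i < size g) a`_i *: map_mx (fun z : int => z%:~R) g`_i.

Definition cone_sub (g h : seq lat) := forall v, cone g v -> cone h v.

Definition dual_vec (g : seq lat) (u : 'rV[R]_n) := forall v, cone g v -> 0 <= dotR u v.
Definition face_set (g : seq lat) (u : 'rV[R]_n) v := cone g v /\ dotR u v = 0.

Definition is_fan (F : seq (seq lat)) : Prop :=
  (forall g, g \in F -> forall v, cone g v -> cone g (- v) -> v = 0) /\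
  (forall g, g \in F -> forall u, dual_vec g u ->
      exists2 f, f \in F & forall v, cone f v <-> face_set g u v) /\
  (forall g h, g \in F -> h \in F ->
      (exists u, dual_vec g u /\ forall v, (cone g v /\ cone h v) <-> face_set g u v) /\
      (exists u, dual_vec h u /\ forall v, (cone g v /\ cone h v) <-> face_set h u v)).

Definition smooth_fan (F : seq (seq lat)) : Prop :=
  forall g, g \in F -> uniq g /\
    exists2 P : 'M[int]_n, P \in unitmx & forall x, x \in g -> exists i, x = row i P.

Definition complete_fan (F : seq (seq lat)) : Prop :=
  forall v, exists2 g, g \in F & cone g v.

Definition maximal_cone (F : seq (seq lat)) g :=
  g \in F /\ forall h, h \in F -> cone_sub g h -> cone_sub h g.

(* projective: existence of a strictly convex piecewise-linear support function
   h(v) = max_sigma <l_sigma, v>, the max being attained exactly on the maximal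
   cones containing v *)
Definition projective_fan (F : seq (seq lat)) : Prop :=
  exists l : seq lat -> 'rV[R]_n, forall g h, maximal_cone F g -> maximal_cone F h ->
    forall v, cone g v ->
      dotR (l h) v <= dotR (l g) v /\ (dotR (l h) v = dotR (l g) v -> cone h v).

Definition smooth_projective_fan F :=
  [/\ is_fan F, smooth_fan F, complete_fan F & projective_fan F].

Definition refinement (G F : seq (seq lat)) : Prop :=
  (forall g, g \in G -> exists2 f, f \in F & cone_sub g f) /\
  (forall f, f \in F -> forall v, cone f v ->
      exists2 g, g \in G & cone_sub g f /\ cone g v).

Definition subgroup (S : pred lat) := S 0 /\ forall x y, S x -> S y -> S (x - y).
Definition split_summand (S : pred lat) :=
  subgroup S /\ exists S' : pred lat, subgroup S' /\
    (forall x, exists a b, [/\ S a, S' b & x = a + b]) /\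
    (forall x, S x -> S' x -> x = 0).

Definition zcomb (c : seq int) (B : seq lat) : lat := \sum_(i < size B) c`_i *: B`_i.
Definition int_basis (S : pred lat) (B : seq lat) :=
  (forall c, size c = size B -> zcomb c B = 0 -> forall i, c`_i = 0) /\
  (forall x, S x <-> exists c, size c = size B /\ x = zcomb c B).

Definition char_eval (m : lat) (t : pt) : R[i] := \prod_i t 0 i ^ (m 0 i).
Definition torus (t : pt) := forall i, t 0 i != 0.

Record layer := Layer { Gam : pred lat; phi : lat -> R[i] }.

Definition is_layer (L : layer) :=
  [/\ split_summand (Gam L),
      forall a b, Gam L a -> Gam L b -> phi L (a + b) = phi L a * phi L b &
      forall a, Gam L a -> phi L a != 0].

Definition layer_set (L : layer) (t : pt) : Prop :=
  torus t /\ forall m, Gam L m -> char_eval m t = phi L m.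

Definition near (x y : pt) (e : R) := forall i, `|y 0 i - x 0 i| < e%:C.
Definition open_in (X U : pt -> Prop) :=
  (forall t, U t -> X t) /\
  forall x, U x -> exists e : R, 0 < e /\ forall y, X y -> near x y e -> U y.
Definition connected (X : pt -> Prop) :=
  forall U V, open_in X U -> open_in X V -> (forall t, X t -> U t \/ V t) ->
    (forall t, ~ (U t /\ V t)) -> (forall t, ~ U t) \/ (forall t, ~ V t).
Definition component (X Y : pt -> Prop) :=
  [/\ (forall t, Y t -> X t), (exists t, Y t), connected Y &
      forall Z, (forall t, Y t -> Z t) -> (forall t, Z t -> X t) -> connected Z ->
        forall t, Z t -> Y t].

Definition saturated k (A : 'I_k -> layer) :=
  forall Y : pt -> Prop,
    (exists i, forall t, layer_set (A i) t <-> Y t) <->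
    (exists S : {set 'I_k}, S != set0 /\
       component (fun t => forall i, i \in S -> layer_set (A i) t) Y).

Definition equal_sign (F : seq (seq lat)) (B : seq lat) :=
  forall x, x \in B -> forall g, g \in F ->
    (forall v, cone g v -> 0 <= pairing x v) \/ (forall v, cone g v -> pairing x v <= 0).

Definition compatible (F : seq (seq lat)) k (A : 'I_k -> layer) :=
  forall i j, (forall t, layer_set (A i) t -> layer_set (A j) t) ->
    exists B, [/\ int_basis (Gam (A i)) B, equal_sign F B &
                  int_basis (Gam (A j)) [seq x <- B | Gam (A j) x]].

(* affine toric chart U_sigma = Specm C[sigma^vee cap M]: its points are unital
   monoid morphisms (sigma^vee cap M, +) -> (C, * ) *)
Definition dual_lat (g : seq lat) (m : lat) := forall v, cone g v -> 0 <= pairing m v.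
Definition chart_point (g : seq lat) (x : lat -> R[i]) :=
  x 0 = 1 /\ forall a b, dual_lat g a -> dual_lat g b -> x (a + b) = x a * x b.

(* x in U_sigma lies in the (Zariski) closure of K (subset T) in U_sigma:
   every regular function on U_sigma vanishing on K vanishes at x *)
Definition in_closure (g : seq lat) (K : pt -> Prop) (x : lat -> R[i]) :=
  forall k (c : 'I_k -> R[i]) (m : 'I_k -> lat), (forall j, dual_lat g (m j)) ->
    (forall t, K t -> \sum_j c j * char_eval (m j) t = 0) ->
    \sum_j c j * x (m j) = 0.

End Toric.

(* On the layer K = K_(Gamma, phi) a character chi^m is determined by the coset
   m + Gamma, up to the constant phi: chi^m = chi^m' phi(m - m') on K when
   m - m' is in Gamma, while characters from distinct cosets are linearly
   independent on K, since K is stable under the subtorus cut out by Gamma and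
   that subtorus separates the cosets.  Hence a regular function on a chart U_tau
   vanishes on K iff, coset by coset, its coefficients weighted by phi sum to 0.
   A point x of U_tau in the closure of K inside U_sigma (tau in sigma) satisfies
   x(m) = phi(m) for every m in Gamma that is nonnegative on sigma; an equal-sign
   basis of Gamma writes every element of Gamma as a difference of two such m,
   so x obeys the same coset rule on all of tau^vee, and therefore annihilates
   every regular function on U_tau vanishing on K. *)
From mathcomp Require Import all_boot all_algebra.
From mathcomp Require Import reals.
From mathcomp.real_closed Require Import complex.
From Stdlib Require Import ClassicalEpsilon.
From mathcomp Require Import ring.
Set Implicit Arguments. Unset Strict Implicit. Unset Printing Implicit Defensive.
Import GRing.Theory Num.Theory.
Local Open Scope ring_scope.

Section Characters.
Variables (R : realType) (n : nat).
Local Notation C := (complex R).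
Local Notation lat := (lat n).
Local Notation pt := (pt R n).

Lemma char_evalD (a b : lat) (t : pt) : torus t ->
  char_eval (a + b) t = char_eval a t * char_eval b t.
Proof.
move=> Ht; rewrite /char_eval -big_split /=; apply: eq_bigr => i _.
by rewrite mxE exprzDr // unitfE Ht.
Qed.

Lemma char_eval0 (t : pt) : char_eval 0 t = 1.
Proof. by rewrite /char_eval big1 // => i _; rewrite mxE expr0z. Qed.

Lemma char_eval_neq0 (m : lat) (t : pt) : torus t -> char_eval m t != 0.
Proof. by move=> Ht; apply/prodf_neq0 => i _; apply: expfz_neq0. Qed.

Definition mulpt (t s : pt) : pt := \row_i (t 0 i * s 0 i).

Lemma torusM (t s : pt) : torus t -> torus s -> torus (mulpt t s).
Proof. by move=> Ht Hs i; rewrite mxE mulf_neq0. Qed.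

Lemma char_evalM (m : lat) (t s : pt) : torus t -> torus s ->
  char_eval m (mulpt t s) = char_eval m t * char_eval m s.
Proof.
move=> Ht Hs; rewrite /char_eval -big_split /=; apply: eq_bigr => i _.
by rewrite mxE exprzMl // unitfE.
Qed.

Lemma char_hom_point (psi : lat -> C) :
  (forall a b, psi (a + b) = psi a * psi b) -> (forall a, psi a != 0) ->
  exists t : pt, torus t /\ forall m, char_eval m t = psi m.
Proof.
move=> psiD psi_neq0.
have psi0 : psi 0 = 1 by apply: (mulfI (psi_neq0 0)); rewrite mulr1 -psiD addr0.
have psiN a : psi (- a) = (psi a)^-1.
  by apply: (mulfI (psi_neq0 a)); rewrite -psiD subrr psi0 divff.
have psiMn a k : psi (a *+ k) = psi a ^+ k.
  by elim: k => [|k IH]; rewrite ?mulr0n ?expr0 // mulrS exprS psiD IH.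
have psiMz a z : psi (a *~ z) = psi a ^ z.
  by case: z => k /=; rewrite ?psiN psiMn.
exists (\row_j psi 'e_j); split; first by move=> i; rewrite mxE.
move=> m; rewrite [in RHS](row_sum_delta m) (big_morph psi psiD psi0).
by apply: eq_bigr => j _; rewrite mxE -[m 0 j]intz scaler_int psiMz intz.
Qed.

Definition char_sum (s : seq (C * lat)) (t : pt) := \sum_(p <- s) p.1 * char_eval p.2 t.

End Characters.

Section Subgroup.
Variables (n : nat) (S : pred (lat n)).
Hypothesis HS : subgroup S.

Lemma subgroup0 : S 0. Proof. by case: HS. Qed.

Lemma subgroupB x y : S x -> S y -> S (x - y). Proof. by case: HS => _; apply. Qed.

Lemma subgroupN x : S x -> S (- x).
Proof. by move=> Sx; rewrite -sub0r subgroupB ?subgroup0. Qed.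

Lemma subgroupD x y : S x -> S y -> S (x + y).
Proof. by move=> Sx Sy; rewrite -[y]opprK subgroupB ?subgroupN. Qed.

Lemma subgroupMn x k : S x -> S (x *+ k).
Proof. by move=> Sx; elim: k => [|k IH]; rewrite ?mulr0n ?subgroup0 // mulrS subgroupD. Qed.

End Subgroup.

Section SplitSummand.
Variables (R : realType) (n : nat) (S : pred (lat n)).
Hypothesis HS : split_summand S.
Local Notation C := (complex R).
Local Notation lat := (lat n).
Local Notation pt := (pt R n).

Lemma split_summand_proj : exists proj : lat -> lat,
  [/\ forall x, S (proj x), {morph proj : a b / a + b},
      forall x, S x -> proj x = x & forall x, proj x = x -> S x].
Proof.
case: HS => HS0 [S' [HS' [Hdec Hint]]].
have Hex x : exists a, S a /\ S' (x - a).
  by have [a [b [Sa S'b ->]]] := Hdec x; exists a; rewrite addrC addKr.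
pose proj x := proj1_sig (constructive_indefinite_description _ (Hex x)).
have [Sp S'p] : (forall x, S (proj x)) /\ (forall x, S' (x - proj x)).
  by split=> x; case: (proj2_sig (constructive_indefinite_description _ (Hex x))).
have eq_proj x y : S y -> S' (x - y) -> proj x = y.
  move=> Sy S'y; apply/eqP; rewrite -subr_eq0; apply/eqP/Hint.
    exact: subgroupB.
  have -> : proj x - y = (x - y) - (x - proj x) by rewrite opprB addrCA addrAC subrr add0r.
  exact: subgroupB.
exists proj; split=> //.
- move=> a b; apply: eq_proj; first exact: subgroupD.
  have -> : a + b - (proj a + proj b) = (a - proj a) - (proj b - b).
    by rewrite opprD addrACA opprB.
  by rewrite subgroupB // -opprB subgroupN.
- by move=> x Sx; apply: eq_proj; rewrite // subrr subgroup0.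
- by move=> x <-.
Qed.

Definition annihilator (s : pt) := torus s /\ forall g, S g -> char_eval g s = 1.

Lemma annihilator_separates d : ~~ S d ->
  exists s, annihilator s /\ char_eval d s != 1.
Proof.
move=> Sd; have [proj [Sp projD projS proj_fix]] := split_summand_proj.
have [i di] : exists i, (d - proj d) 0 i != 0.
  apply/not_all_not_ex => hall; move/negP: Sd; apply; apply: proj_fix.
  apply/eqP; rewrite eq_sym -subr_eq0; apply/eqP/rowP => j; rewrite [RHS]mxE.
  exact/eqP/negPn/negP/hall.
have two_unit : (2 : C) \is a GRing.unit by rewrite unitfE pnatr_eq0.
pose psi m := (2 : C) ^ ((m - proj m) 0 i).
have psiD a b : psi (a + b) = psi a * psi b.
  by rewrite /psi projD -exprzDr // !mxE; congr (_ ^ _); ring.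
have psi_neq0 a : psi a != 0 by apply: expfz_neq0; rewrite pnatr_eq0.
have [s [Hs Hc]] := char_hom_point psiD psi_neq0.
exists s; split; first by split=> // g Sg; rewrite Hc /psi projS // subrr mxE expr0z.
by rewrite Hc pexprz_eq1 ?ler0n // negb_or di /= order.Order.POrderTheory.gt_eqF // ltr1n.
Qed.

End SplitSummand.

Section Duality.
Variables (R : realType) (n : nat).
Local Notation lat := (lat n).

Lemma pairingD (m1 m2 : lat) (v : 'rV[R]_n) :
  pairing (m1 + m2) v = pairing m1 v + pairing m2 v.
Proof. by rewrite /pairing -big_split; apply: eq_bigr => i _; rewrite mxE intrD mulrDl. Qed.

Lemma pairingN (m : lat) (v : 'rV[R]_n) : pairing (- m) v = - pairing m v.
Proof. by rewrite /pairing -sumrN; apply: eq_bigr => i _; rewrite mxE intrN mulNr. Qed.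

Lemma pairing0 (v : 'rV[R]_n) : pairing (0 : lat) v = 0.
Proof. by rewrite /pairing big1 // => i _; rewrite mxE mul0r. Qed.

Lemma dual_lat0 (f : seq lat) : dual_lat R f 0.
Proof. by move=> v _; rewrite pairing0. Qed.

Lemma dual_latD (f : seq lat) (a b : lat) :
  dual_lat R f a -> dual_lat R f b -> dual_lat R f (a + b).
Proof. by move=> fa fb v fv; rewrite pairingD addr_ge0 ?fa ?fb. Qed.

Lemma dual_latMn (f : seq lat) (a : lat) k : dual_lat R f a -> dual_lat R f (a *+ k).
Proof.
move=> fa; elim: k => [|k IH]; first by rewrite mulr0n; apply: dual_lat0.
by rewrite mulrS; apply: dual_latD.
Qed.

Lemma dual_lat_sub (g f : seq lat) a : cone_sub R g f -> dual_lat R f a -> dual_lat R g a.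
Proof. by move=> gf fa v gv; apply/fa/gf. Qed.

Lemma equal_sign_refinement (G F : seq (seq lat)) B :
  refinement R G F -> equal_sign R F B -> equal_sign R G B.
Proof.
move=> [GF _] sgnB b Bb g Gg; have [f Ff gf] := GF g Gg.
by case: (sgnB b Bb f Ff) => h; [left|right] => v gv; apply/h/gf.
Qed.

Lemma compatible_refinement (G F : seq (seq lat)) k (A : 'I_k -> layer R n) :
  refinement R G F -> compatible F A -> compatible G A.
Proof.
move=> GF cFA i j Kij; have [B [Bi sgnB Bj]] := cFA i j Kij.
by exists B; split=> //; apply: equal_sign_refinement sgnB.
Qed.

End Duality.

Section DualDifferences.
Variables (R : realType) (n : nat) (S : pred (lat n)).
Hypothesis HS : subgroup S.
Local Notation lat := (lat n).

Definition dual_diff (f : seq lat) (d : lat) := exists p q,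
  [/\ S p, S q, dual_lat R f p, dual_lat R f q & d = p - q].

Lemma dual_diff0 f : dual_diff f 0.
Proof. by exists 0, 0; rewrite subr0 subgroup0 //; split=> //; apply: dual_lat0. Qed.

Lemma dual_diffD f a b : dual_diff f a -> dual_diff f b -> dual_diff f (a + b).
Proof.
move=> [p [q [Sp Sq fp fq ->]]] [p' [q' [Sp' Sq' fp' fq' ->]]].
exists (p + p'), (q + q'); split; rewrite ?subgroupD //.
- exact: dual_latD.
- exact: dual_latD.
- by rewrite opprD addrACA.
Qed.

Lemma dual_diffMz f u z : S u -> dual_lat R f u -> dual_diff f (u *~ z).
Proof.
move=> Su fu; case: z => k.
  exists (u *+ k), 0; split; rewrite ?subr0 ?subgroupMn ?subgroup0 //.
  - exact: dual_latMn.
  - exact: dual_lat0.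
exists 0, (u *+ k.+1); split; rewrite ?sub0r ?subgroupMn ?subgroup0 //.
- exact: dual_lat0.
- exact: dual_latMn.
Qed.

Lemma int_basis_mem B i : int_basis S B -> (i < size B)%N -> S B`_i.
Proof.
move=> [_ SB] ltiB; apply/SB.
exists [seq (j == i)%:Z | j <- iota 0 (size B)]; split.
  by rewrite size_map size_iota.
rewrite /zcomb (bigD1 (Ordinal ltiB)) //= big1 ?addr0.
  by rewrite (nth_map 0%N) ?size_iota // nth_iota // add0n eqxx scale1r.
move=> j ji; rewrite (nth_map 0%N) ?size_iota // nth_iota // add0n.
have -> : (j == i :> nat) = false.
  by apply/negbTE; apply: contra ji => /eqP ji; apply/eqP/val_inj.
by rewrite scale0r.
Qed.

Lemma equal_sign_dual_diff (F : seq (seq lat)) f B d : f \in F -> int_basis S B -> equal_sign R F B ->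
  S d -> dual_diff f d.
Proof.
move=> Ff SB sgnB; have [_ /(_ d) SBd] := SB; move=> /SBd[c [_ ->]].
rewrite /zcomb; apply: (big_ind (dual_diff f)) => [|a b|i _]; first exact: dual_diff0.
  exact: dual_diffD.
have SBi := int_basis_mem SB (ltn_ord i).
rewrite -[c`_i]intz scaler_int.
case: (sgnB _ (mem_nth 0 (ltn_ord i)) f Ff) => sgn; first exact: dual_diffMz.
rewrite -[B`_i *~ _]opprK -mulrNz -mulNrz; apply: dual_diffMz; first exact: subgroupN.
by move=> v fv; rewrite pairingN oppr_ge0 sgn.
Qed.

End DualDifferences.

Section Layer.
Variables (R : realType) (n : nat) (L : layer R n).
Hypothesis HL : is_layer L.
Local Notation C := (complex R).
Local Notation lat := (lat n).
Local Notation pt := (pt R n).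
Local Notation Gam := (Gam L).
Local Notation phi := (phi L).

Lemma layer_summand : split_summand Gam. Proof. by case: HL. Qed.

Lemma layer_subgroup : subgroup Gam. Proof. by case: layer_summand. Qed.

Lemma layer_phiD a b : Gam a -> Gam b -> phi (a + b) = phi a * phi b.
Proof. by case: HL => _ phiD _; apply: phiD. Qed.

Lemma layer_phi_neq0 a : Gam a -> phi a != 0.
Proof. by case: HL => _ _; apply. Qed.

Lemma layer_set_nonempty : exists t, layer_set L t.
Proof.
have [proj [Sp projD projS _]] := split_summand_proj layer_summand.
have psiD a b : phi (proj (a + b)) = phi (proj a) * phi (proj b).
  by rewrite projD layer_phiD.
have [t [Ht Hc]] := char_hom_point psiD (fun a => layer_phi_neq0 (Sp a)).
by exists t; split=> // m Sm; rewrite Hc projS.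
Qed.

Lemma layer_set_shift m m' t : layer_set L t -> Gam (m - m') ->
  char_eval m t = char_eval m' t * phi (m - m').
Proof. by move=> [Ht Kt] Sm; rewrite -Kt // -char_evalD // addrC subrK. Qed.

Lemma layer_set_mul_annihilator t s : layer_set L t -> annihilator Gam s ->
  layer_set L (mulpt t s).
Proof.
move=> [Ht Kt] [Hs Hann]; split; first exact: torusM.
by move=> m Sm; rewrite char_evalM // Kt // Hann // mulr1.
Qed.

(* Translating K by an annihilator point s multiplies chi^m by chi^m(s); taking s
   separating the first two cosets eliminates one character from the relation. *)
Lemma layer_coset_independent m0 (s : seq (C * lat)) a :
  (forall p, p \in s -> ~~ Gam (p.2 - m0)) ->
  (forall t, layer_set L t -> a * char_eval m0 t + char_sum s t = 0) -> a = 0.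
Proof.
have [N] := ubnP (size s); elim: N s a => // N IH [|[c1 m1] s] a /= size_s s_cosets Hrel.
  have [t0 Kt0] := layer_set_nonempty; have [Ht0 _] := Kt0.
  move/eqP: (Hrel t0 Kt0); rewrite /char_sum big_nil addr0 mulf_eq0.
  by rewrite (negbTE (char_eval_neq0 _ Ht0)) orbF => /eqP.
have [u [Hu sep]] := annihilator_separates R layer_summand (s_cosets _ (mem_head _ _)).
have Hu_torus : torus u by case: Hu.
set e0 := char_eval m0 u; set e1 := char_eval m1 u.
have e01 : e0 - e1 != 0.
  rewrite subr_eq0 /e1 -[m1](subrK m0) char_evalD //; apply: contra sep => /eqP e0E.
  by apply/eqP/(mulIf (char_eval_neq0 m0 Hu_torus)); rewrite mul1r.
suff : a * (e0 - e1) = 0 by move/eqP; rewrite mulf_eq0 (negbTE e01) orbF => /eqP.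
apply: (IH [seq (p.1 * (char_eval p.2 u - e1), p.2) | p <- s]); first by rewrite size_map.
  by move=> p /mapP [q sq ->]; apply: (s_cosets q); rewrite in_cons sq orbT.
move=> t Kt; have [Ht _] := Kt.
have rel_t := Hrel _ Kt; have rel_tu := Hrel _ (layer_set_mul_annihilator Kt Hu).
rewrite /char_sum !big_cons /= !char_evalM // -/e0 -/e1 in rel_t rel_tu.
rewrite (eq_bigr (fun p => p.1 * (char_eval p.2 t * char_eval p.2 u))) in rel_tu;
  last by move=> p _; rewrite char_evalM.
set X := \sum_(p <- s) _ in rel_tu; set Y := \sum_(p <- s) _ in rel_t.
rewrite /char_sum big_map /=.
have -> : \sum_(p <- s) p.1 * (char_eval p.2 u - e1) * char_eval p.2 t = X - e1 * Y.
  by rewrite mulr_sumr -sumrB; apply: eq_bigr => p _; ring.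
transitivity (a * (char_eval m0 t * e0) + (c1 * (char_eval m1 t * e1) + X)
  - e1 * (a * char_eval m0 t + (c1 * char_eval m1 t + Y))); first ring.
by rewrite rel_tu rel_t mulr0 subr0.
Qed.

Definition coset_rule (g : seq lat) (x : lat -> C) := forall m m',
  dual_lat R g m -> dual_lat R g m' -> Gam (m - m') -> x m = x m' * phi (m - m').

Lemma coset_rule_annihilates g x (s : seq (C * lat)) : coset_rule g x ->
  (forall p, p \in s -> dual_lat R g p.2) ->
  (forall t, layer_set L t -> char_sum s t = 0) ->
  \sum_(p <- s) p.1 * x p.2 = 0.
Proof.
move=> rule_x; have [N] := ubnP (size s).
elim: N s => // N IH [|[c0 m0] s] /= size_s s_dual Hrel; first by rewrite big_nil.
pose same (p : C * lat) := Gam (p.2 - m0).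
set s1 := [seq p <- s | same p]; set s2 := [seq p <- s | ~~ same p].
have split_s (h : C * lat -> C) :
    \sum_(p <- s) h p = \sum_(p <- s1) h p + \sum_(p <- s2) h p.
  by rewrite !big_filter [LHS](bigID same).
have g_m0 : dual_lat R g m0 by apply: (s_dual (c0, m0)); rewrite mem_head.
have g_s p : p \in s -> dual_lat R g p.2.
  by move=> sp; apply: s_dual; rewrite in_cons sp orbT.
set a := c0 + \sum_(p <- s1) p.1 * phi (p.2 - m0).
have rel_s2 t : layer_set L t -> a * char_eval m0 t + char_sum s2 t = 0.
  move=> Kt; rewrite -(Hrel t Kt) /char_sum big_cons split_s addrA; congr (_ + _).
  rewrite /a mulrDl mulr_suml; congr (_ + _).
  apply: eq_big_seq => p; rewrite mem_filter => /andP [same_p _].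
  by rewrite (layer_set_shift Kt same_p); ring.
have a0 : a = 0.
  by apply: (layer_coset_independent (s := s2)) rel_s2 => p; rewrite mem_filter => /andP [].
have sum_s2 : \sum_(p <- s2) p.1 * x p.2 = 0.
  apply: IH => [|p|t Kt].
  - by rewrite -ltnS (leq_ltn_trans _ size_s) // ltnS size_filter count_size.
  - by rewrite mem_filter => /andP [_ /g_s].
  - by have := rel_s2 t Kt; rewrite a0 mul0r add0r.
rewrite big_cons split_s sum_s2 addr0; transitivity (x m0 * a); last by rewrite a0 mulr0.
rewrite /a mulrDr mulr_sumr mulrC; congr (_ + _).
apply: eq_big_seq => p; rewrite mem_filter => /andP [same_p sp].
by rewrite (rule_x _ _ (g_s _ sp) g_m0 same_p); ring.
Qed.

Lemma in_closure_layer_phi f x : x 0 = 1 -> in_closure f (layer_set L) x ->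
  forall m, Gam m -> dual_lat R f m -> x m = phi m.
Proof.
move=> x0 x_cl m Sm fm.
pose c (j : 'I_2) := if val j == 0%N then 1 else - phi m.
pose mj (j : 'I_2) := if val j == 0%N then m else 0.
have f_mj j : dual_lat R f (mj j) by rewrite /mj; case: ifP => _ //; apply: dual_lat0.
have rel t : layer_set L t -> \sum_j c j * char_eval (mj j) t = 0.
  case=> _ Kt; rewrite !big_ord_recl big_ord0 /c /mj /= Kt //.
  by rewrite char_eval0 mul1r mulr1 addr0 subrr.
move/eqP: (x_cl 2%N c mj f_mj rel); rewrite !big_ord_recl big_ord0 /c /mj /= x0.
by rewrite mul1r mulr1 addr0 subr_eq0 => /eqP.
Qed.

(* Write m - m' = p - q with p, q in Gamma nonnegative on f; then
   x(m) x(q) = x(m + q) = x(m' + p) = x(m') x(p), and x = phi at p and q. *)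
Lemma chart_point_coset_rule (F : seq (seq lat)) f g x B :
  f \in F -> int_basis Gam B -> equal_sign R F B -> cone_sub R g f ->
  chart_point g x -> in_closure f (layer_set L) x -> coset_rule g x.
Proof.
move=> Ff SB sgnB gf [x0 xD] x_cl m m' gm gm' Smm'.
have [p [q [Sp Sq fp fq pq]]] :=
  equal_sign_dual_diff layer_subgroup Ff SB sgnB Smm'.
have mq : m + q = m' + p by rewrite -[m](subrK m') pq addrAC subrK addrC.
have := xD _ _ gm (dual_lat_sub gf fq).
rewrite mq xD //; last exact: dual_lat_sub gf fp.
rewrite (in_closure_layer_phi x0 x_cl Sp fp) (in_closure_layer_phi x0 x_cl Sq fq) => xmq.
apply: (mulIf (layer_phi_neq0 Sq)); rewrite -xmq pq -mulrA -layer_phiD ?subrK //.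
by apply: subgroupB => //; exact: layer_subgroup.
Qed.

End Layer.

Theorem proposition5p1 (R : realType) (n k : nat) (A : 'I_k -> layer R n)
    (F G : seq (seq (lat n))) :
  (forall i, is_layer (A i)) -> saturated A ->
  smooth_projective_fan R F -> compatible F A ->
  smooth_projective_fan R G -> refinement R G F ->
  compatible G A /\
  (forall i, forall g f, g \in G -> f \in F -> cone_sub R g f ->
     forall x, chart_point g x ->
       (in_closure g (layer_set (A i)) x <-> in_closure f (layer_set (A i)) x)).
Proof.
move=> layerA _ _ cFA _ GF; split; first exact: compatible_refinement cFA.
move=> i g f Gg Ff gf x x_chart; split.
  by move=> x_cl k' c m f_m; apply: x_cl => j; apply/dual_lat_sub/f_m.
move=> x_cl k' c m g_m Hrel.
have [B [SB sgnB _]] := cFA i i (fun t Kt => Kt).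
have rule_x := chart_point_coset_rule (layerA i) Ff SB sgnB gf x_chart x_cl.
have := coset_rule_annihilates (layerA i) (s := [seq (c j, m j) | j <- enum 'I_k']) rule_x.
rewrite big_map big_enum; apply=> [p /mapP [j _ ->]|t Kt]; first exact: g_m.
by rewrite /char_sum big_map big_enum; apply: Hrel.
Qed.
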